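(* (Depth efficiency) Fix a leading degree $r\ge 2$. Let $\bm d_q=(d_0,\dots,d_{h_q})$ be a QRes architecture whose functional variety is filling, with leading functional variety $\mathcal{V}^2_{\bm d_q,r}$, and let $\bm d_n=(d_0',\dots,d_{h_n}')$ be a plain neural network architecture with leading functional variety $\mathcal{V}_{\bm d_n,r}$, where $h_n,h_q>1$, $d_0=d_0'$ and $d_{h_q}=d'_{h_n}$. If $\dim\mathcal{V}_{\bm d_n,r}\ge\dim\mathcal{V}^2_{\bm d_q,r}$, then $$h_n\ \ge\ 1+\Big(1+\frac{\log 2}{\log r}\Big)(h_q-1).$$
   Context: An architecture is a vector $\bm d=(d_0,\dots,d_h)$ of layer widths; $h$ is the depth, and layer $i$ maps $\mathbb{R}^{d_{i-1}}\to\mathbb{R}^{d_i}$. A plain neural-network layer is $x\mapsto\sigma(Wx+b)$; a QRes layer is $x\mapsto\sigma(W_2x\circ W_1x+W_1x+b)$, with trainable $W_1,W_2,b$, $\circ$ the Hadamard product, $\sigma$ applied entrywise. The functional space of an architecture is the image of the parameter-to-function map. Any activation is decomposed (e.g. by Taylor approximation) into polynomials; the highest degree $r$ appearing is its leading degree. The leading functional space is the subspace of the functional space consisting of homogeneous polynomials of highest degree; its Zariski closure is the leading functional variety, denoted $\mathcal{V}_{\bm d,r}$ (plain network, activation of leading degree $r$) or $\mathcal{V}^2_{\bm d,r}$ (QRes network). $\mathrm{Sym}_k(\mathbb{R}^n)$ denotes homogeneous degree-$k$ polynomials in $n$ real variables. A plain architecture $\bm d$ has a filling functional variety for degree $r$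 if $\mathcal{V}_{\bm d,r}=\mathrm{Sym}_{r^{h-1}}(\mathbb{R}^{d_0})^{d_h}$; a QRes architecture is filling for leading degree $r$ if its leading functional variety equals the full space of $d_h$-tuples of homogeneous polynomials of its leading degree, namely $\mathcal{V}^2_{\bm d,r}=\mathrm{Sym}_{(2r)^{h-1}}(\mathbb{R}^{d_0})^{d_h}$.
   Formalization: The input width $d_0$ (equal to $d_0'$) is at least 2, and every layer width of both architectures $\bm d_q$ and $\bm d_n$ is positive. Apart from conventions, each condition added here is assumed in the paper as well or is needed for the statement above to hold. *)

From Stdlib Require Import Reals.
From HB Require Import structures.
From mathcomp Require Import all_boot all_order all_algebra.
From mathcomp Require Import mpoly.
From mathcomp Require Import Rstruct.

Set Implicit Arguments.
Unset Strict Implicit.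
Unset Printing Implicit Defensive.

Import Order.TTheory GRing.Theory Num.Theory.
Local Open Scope ring_scope.

Notation Poly n := {mpoly R[n]}.

Section Net.
Variable n : nat.  (* number of input variables d_0 *)

Definition net_input : seq (Poly n) := [seq 'X_i | i <- enum 'I_n].

(* Affine layer, leading (homogeneous) part: x |-> W x,
   W given by its entries W i j (row i, column j); output width dout. *)
Definition lin_layer (W : nat -> nat -> R) (dout : nat) (v : seq (Poly n))
  : seq (Poly n) :=
  [seq \sum_(j < size v) W i j *: v`_j | i <- iota 0 dout].

(* Leading part of the activation: entrywise x |-> x^r. *)
Definition act (r : nat) (v : seq (Poly n)) : seq (Poly n) :=
  [seq p ^+ r | p <- v].

Definition hadamard (u v : seq (Poly n)) : seq (Poly n) :=
  [seq x.1 * x.2 | x <- zip u v].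

Fixpoint plain_rec (r : nat) (W : nat -> nat -> nat -> R) (l : nat)
  (ds : seq nat) (v : seq (Poly n)) : seq (Poly n) :=
  match ds with
  | [::] => v
  | [:: dl] => lin_layer (W l) dl v
  | dl :: ds' => plain_rec r W l.+1 ds' (act r (lin_layer (W l) dl v))
  end.

Fixpoint qres_rec (r : nat) (W1 W2 : nat -> nat -> nat -> R) (l : nat)
  (ds : seq nat) (v : seq (Poly n)) : seq (Poly n) :=
  match ds with
  | [::] => v
  | [:: dl] => lin_layer (W1 l) dl v
  | dl :: ds' => qres_rec r W1 W2 l.+1 ds'
                   (act r (hadamard (lin_layer (W2 l) dl v)
                                    (lin_layer (W1 l) dl v)))
  end.

(* Coordinates on tuples of polynomials: c = (output index, monomial). *)
Definition coord (c : nat * 'X_{1..n}) (s : seq (Poly n)) : R :=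
  (s`_(c.1))@_(c.2).

Definition polyfun k (cs : 'I_k -> nat * 'X_{1..n}) (P : {mpoly R[k]})
  (s : seq (Poly n)) : R :=
  P.@[fun i => coord (cs i) s].

Definition vanishes_on (S : seq (Poly n) -> Prop) k
  (cs : 'I_k -> nat * 'X_{1..n}) (P : {mpoly R[k]}) : Prop :=
  forall s, S s -> polyfun cs P s = 0.

Definition Sym_tuple (D m : nat) (s : seq (Poly n)) : Prop :=
  size s = m /\ all (fun p => p \is D.-homog) s.

Definition zariski_closure (D m : nat) (S : seq (Poly n) -> Prop)
  (s : seq (Poly n)) : Prop :=
  Sym_tuple D m s /\
  forall k cs (P : {mpoly R[k]}), vanishes_on S cs P -> polyfun cs P s = 0.

Definition alg_indep (S : seq (Poly n) -> Prop) k
  (cs : 'I_k -> nat * 'X_{1..n}) : Prop :=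
  forall P : {mpoly R[k]}, vanishes_on S cs P -> P = 0.

(* dim S = k : the transcendence degree of the coordinate ring of S, i.e.
   the largest number of algebraically independent coordinate functions. *)
Definition is_dim (S : seq (Poly n) -> Prop) (k : nat) : Prop :=
  (exists cs : 'I_k -> nat * 'X_{1..n}, alg_indep S cs) /\
  (forall k' (cs : 'I_k' -> nat * 'X_{1..n}), alg_indep S cs -> (k' <= k)%N).

End Net.

Unset Implicit Arguments.

Definition depth (d : seq nat) : nat := (size d).-1.

Definition plain_space (r : nat) (d : seq nat) (s : seq (Poly (head 0%N d)))
  : Prop :=
  exists W, s = plain_rec r W 1 (behead d) (net_input (head 0%N d)).

Definition qres_space (r : nat) (d : seq nat) (s : seq (Poly (head 0%N d)))
  : Prop :=
  exists W1 W2, s = qres_rec r W1 W2 1 (behead d) (net_input (head 0%N d)).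

Definition V_plain (r : nat) (d : seq nat) :=
  zariski_closure (r ^ (depth d).-1) (last 0%N d) (plain_space r d).

Definition V_qres (r : nat) (d : seq nat) :=
  zariski_closure ((2 * r) ^ (depth d).-1) (last 0%N d) (qres_space r d).

Definition qres_filling (r : nat) (d : seq nat) : Prop :=
  forall s, V_qres r d s <-> Sym_tuple ((2 * r) ^ (depth d).-1) (last 0%N d) s.

From Pilot Require Import Defs.
From Stdlib Require Import Reals Lra.
From HB Require Import structures.
From mathcomp Require Import all_boot all_order all_algebra.
From mathcomp Require Import mpoly.
From mathcomp Require Import Rstruct zify.

(* Filling makes V^2_{d_q,r} the whole space Sym_D(R^d_0)^(d_h), D = (2r)^(h_q-1),
   whose dimension is the number N(D) of coordinates (output index, monomial of
   degree D), since these are algebraically independent there.  V_{d_n,r} lies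
   in Sym_D'(R^d_0)^(d_h), D' = r^(h_n-1), so its dimension is at most N(D').
   For d_0 >= 2, N is strictly increasing in the degree, so the dimension
   hypothesis forces (2r)^(h_q-1) <= r^(h_n-1); taking logarithms gives the
   bound. *)

Set Implicit Arguments.
Unset Strict Implicit.
Unset Printing Implicit Defensive.

Import Order.TTheory GRing.Theory Num.Theory.

Section PolynomialFunctions.
Local Open Scope ring_scope.
Variable K : numDomainType.

Lemma poly_eq0_horner (q : {poly K}) : (forall t, q.[t] = 0) -> q = 0.
Proof.
move=> q0; apply: (@roots_geq_poly_eq0 _ q [seq i%:R | i <- iota 0 (size q)]).
- by apply/allP => x _; rewrite rootE q0.
- by rewrite map_inj_uniq ?iota_uniq // => a b /eqP; rewrite eqr_nat => /eqP.
- by rewrite size_map size_iota.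
Qed.

Section FirstVariable.
Variable n : nat.

Definition mnm_tail (m : 'X_{1..n.+1}) : 'X_{1..n} :=
  [multinom m (lift ord0 i) | i < n].

Lemma mnm_tail_inj (m m' : 'X_{1..n.+1}) :
  m ord0 = m' ord0 -> mnm_tail m = mnm_tail m' -> m = m'.
Proof.
move=> eq0 eq_tail; apply/mnmP => k; case: (unliftP ord0 k) => [i ->|-> //].
by have := congr1 (fun mm : 'X_{1..n} => mm i) eq_tail; rewrite !mnmE.
Qed.

Definition mslice (p : {mpoly K[n.+1]}) (j : nat) : {mpoly K[n]} :=
  \sum_(m <- msupp p | m ord0 == j) p@_m *: 'X_[mnm_tail m].

Lemma mcoeff_mslice (p : {mpoly K[n.+1]}) m :
  (mslice p (m ord0))@_(mnm_tail m) = p@_m.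
Proof.
rewrite {2}(mpolyE p) !raddf_sum /= big_mkcond; apply: eq_bigr => m' _.
rewrite !mcoeffZ !mcoeffX; have [-> | ne_m] := eqVneq m' m; first by rewrite !eqxx.
case: eqP => [eq0|]; last by rewrite mulr0.
by case: eqP => // /(mnm_tail_inj eq0) eq_m; rewrite eq_m eqxx in ne_m.
Qed.

Definition cons_point (t : K) (w : 'I_n -> K) (i : 'I_n.+1) : K :=
  if unlift ord0 i is Some k then w k else t.

Definition mspecialize (p : {mpoly K[n.+1]}) (w : 'I_n -> K) : {poly K} :=
  \sum_(m <- msupp p) (p@_m * \prod_(i < n) w i ^+ m (lift ord0 i)) *: 'X^(m ord0).

Lemma horner_mspecialize p w t : (mspecialize p w).[t] = p.@[cons_point t w].
Proof.
rewrite mevalE horner_sum; apply: eq_bigr => m _.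
rewrite hornerZ hornerXn big_ord_recl /cons_point unlift_none.
under [X in _ = _ * (_ * X)]eq_bigr do rewrite liftK.
by rewrite -mulrA [_ * t ^+ _]mulrC.
Qed.

Lemma coef_mspecialize p w j : (mspecialize p w)`_j = (mslice p j).@[w].
Proof.
rewrite coef_sum rmorph_sum [RHS]big_mkcond /=; apply: eq_bigr => m _.
rewrite coefZ coefXn mevalZ mevalX eq_sym.
case: eqP => _; last by rewrite mulr0.
by rewrite mulr1; congr (_ * _); apply: eq_bigr => i _; rewrite mnmE.
Qed.

End FirstVariable.

Lemma mpoly_eq0_meval n (p : {mpoly K[n]}) : (forall v, p.@[v] = 0) -> p = 0.
Proof.
elim: n p => [|n IH] p p0.
  have := p0 (fun _ => 0); rewrite {1}(nvar0_mpolyC p) mevalC => p00.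
  by rewrite (nvar0_mpolyC p) p00.
apply/mpolyP => m; rewrite mcoeff0 -mcoeff_mslice.
suff -> : mslice p (m ord0) = 0 by rewrite mcoeff0.
apply: IH => w; rewrite -coef_mspecialize.
suff -> : mspecialize p w = 0 by rewrite coef0.
by apply: poly_eq0_horner => t; rewrite horner_mspecialize.
Qed.

End PolynomialFunctions.

Section SymCoordinates.
Local Open Scope ring_scope.
Variables n D m : nat.

Definition sym_coords : {set 'I_m * 'X_{1..n < D.+1}} :=
  [set c | mdeg (val c.2) == D].

Definition coord_index (c : 'I_m * 'X_{1..n < D.+1}) : nat * 'X_{1..n} :=
  (val c.1, val c.2).

Lemma alg_indep_coord_neq0 (S : seq {mpoly R[n]} -> Prop) k cs (j : 'I_k) :
  alg_indep S cs -> ~ (forall s, S s -> Defs.coord (cs j) s = 0).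
Proof.
move=> indep vanish.
have /(congr1 (mcoeff U_(j))) : ('X_j : {mpoly R[k]}) = 0.
  by apply: indep => s Ss; rewrite /polyfun mevalXU vanish.
by rewrite mcoeffXU eqxx mcoeff0 => /eqP; rewrite oner_eq0.
Qed.

Lemma alg_indep_inj (S : seq {mpoly R[n]} -> Prop) k (cs : 'I_k -> _) :
  alg_indep S cs -> injective cs.
Proof.
move=> indep j1 j2 eq_cs; apply/eqP/negPn/negP => ne_j.
have /(congr1 (mcoeff U_(j1))) : ('X_j1 - 'X_j2 : {mpoly R[k]}) = 0.
  by apply: indep => s _; rewrite /polyfun mevalB !mevalXU eq_cs subrr.
rewrite mcoeffB !mcoeffXU eqxx eq_sym (negbTE ne_j) subr0 mcoeff0.
by move/eqP; rewrite oner_eq0.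
Qed.

Lemma alg_indep_coord_sym (S : seq {mpoly R[n]} -> Prop) k cs (j : 'I_k) :
  (forall s, S s -> Sym_tuple D m s) -> alg_indep S cs ->
  cs j \in image coord_index sym_coords.
Proof.
move=> S_sym indep; case E: (cs j) => [a mu].
have [a_lt | a_ge] := ltnP a m; last first.
  case: (alg_indep_coord_neq0 (j := j) indep) => s /S_sym [size_s _].
  by rewrite /Defs.coord E nth_default ?mcoeff0 // size_s.
have [deg_mu | deg_ne] := eqVneq (mdeg mu) D; last first.
  case: (alg_indep_coord_neq0 (j := j) indep) => s /S_sym [size_s homog_s].
  rewrite /Defs.coord E; apply: dhomog_nemf_coeff deg_ne.
  by apply: (allP homog_s); rewrite mem_nth // size_s.
have mu_lt : (mdeg mu < D.+1)%N by rewrite deg_mu.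
by apply/imageP; exists (Ordinal a_lt, BMultinom mu_lt); rewrite // inE /= deg_mu.
Qed.

Lemma dim_le_card_sym_coords (S : seq {mpoly R[n]} -> Prop) k :
  (forall s, S s -> Sym_tuple D m s) -> is_dim S k -> (k <= #|sym_coords|)%N.
Proof.
move=> S_sym [[cs indep] _].
have := @uniq_leq_size _ [seq cs j | j <- enum 'I_k] (image coord_index sym_coords).
rewrite size_map size_enum_ord size_image; apply.
  by rewrite map_inj_uniq ?enum_uniq //; apply: alg_indep_inj indep.
by move=> _ /mapP[j _ ->]; apply: alg_indep_coord_sym S_sym indep.
Qed.

Definition sym_coord_fun (i : 'I_#|sym_coords|) := coord_index (enum_val i).

Definition sym_tuple_of (x : 'I_#|sym_coords| -> R) : seq {mpoly R[n]} :=
  mkseq (fun a => \sum_i (if val (enum_val i).1 == a then x i else 0)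
                           *: 'X_[val (enum_val i).2]) m.

Lemma sym_tuple_ofP x : Sym_tuple D m (sym_tuple_of x).
Proof.
split; first by rewrite size_mkseq.
apply/allP => _ /mapP[a _ ->]; apply: rpred_sum => i _; apply: rpredZ.
by rewrite dhomogX; have := enum_valP i; rewrite inE.
Qed.

Lemma coord_sym_tuple_of x i : Defs.coord (sym_coord_fun i) (sym_tuple_of x) = x i.
Proof.
rewrite /Defs.coord /= nth_mkseq // raddf_sum (bigD1 i) //= eqxx.
rewrite mcoeffZ mcoeffX eqxx mulr1 big1 ?addr0 // => i' ne_i.
rewrite mcoeffZ mcoeffX; case: eqP => [eq1|]; last by rewrite mul0r.
case: eqP => [eq2|]; last by rewrite mulr0.
suff /enum_val_inj eq_i : enum_val i' = enum_val i by rewrite eq_i eqxx in ne_i.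
by move: eq1 eq2; case: (enum_val i') (enum_val i) => [a1 b1] [a2 b2] /= /val_inj -> /val_inj ->.
Qed.

Lemma alg_indep_sym_coords : alg_indep (Sym_tuple D m) sym_coord_fun.
Proof.
move=> P vanish; apply: mpoly_eq0_meval => x.
rewrite -(vanish _ (sym_tuple_ofP x)); apply: meval_eq => i.
by rewrite coord_sym_tuple_of.
Qed.

Lemma card_sym_coords_le_dim (S : seq {mpoly R[n]} -> Prop) k :
  (forall s, Sym_tuple D m s -> S s) -> is_dim S k -> (#|sym_coords| <= k)%N.
Proof.
move=> sym_S [_ maximal]; apply: (maximal _ sym_coord_fun) => P vanish.
by apply: alg_indep_sym_coords => s /sym_S; apply: vanish.
Qed.

End SymCoordinates.

(* Multiplying by x_0^(D'-D) embeds the degree-D coordinates into the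
   degree-D' ones, missing x_1^D'. *)
Lemma card_sym_coords_lt n m D D' : (1 < n)%N -> (0 < m)%N -> (D < D')%N ->
  (#|sym_coords n D m| < #|sym_coords n D' m|)%N.
Proof.
move=> n_gt1 m_gt0 lt_D.
pose x0 : 'I_n := Ordinal (ltnW n_gt1).
pose shift := (U_(x0) *+ (D' - D))%MM.
have shift_deg (mu : 'X_{1..n < D.+1}) : (mdeg (val mu + shift)%MM < D'.+1)%N.
  have : (mdeg (val mu) < D.+1)%N := bmdeg mu.
  by rewrite mdegD mdegMn mdeg1 mul1n; lia.
pose g (c : 'I_m * 'X_{1..n < D.+1}) := (c.1, BMultinom (shift_deg c.2)).
have g_inj : injective g.
  move=> [a1 b1] [a2 b2] eq_g; congr pair; first exact: (congr1 fst eq_g).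
  apply/val_inj/(@addIm _ shift); exact: (congr1 (fun c => val c.2) eq_g).
rewrite -(card_imset (sym_coords n D m) g_inj).
apply: proper_card; apply/properP; split.
  apply/subsetP => y /imsetP[c]; rewrite inE => /eqP deg_c ->.
  by rewrite inE -[val (g c).2]/(val c.2 + shift)%MM mdegD mdegMn mdeg1 deg_c; lia.
have pure_deg : (mdeg (U_(Ordinal n_gt1) *+ D')%MM < D'.+1)%N.
  by rewrite mdegMn mdeg1 mul1n.
exists (Ordinal m_gt0, BMultinom pure_deg); first by rewrite inE /= mdegMn mdeg1 mul1n.
apply/imsetP => -[c _ /(congr1 (fun c => (val c.2 : 'X_{1..n}) x0))].
by rewrite /= mulmnE mnm1E mnmDE mulmnE mnm1E eqxx /=; lia.
Qed.

Local Open Scope R_scope.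

Lemma pow_le_ln_bound (x : R) (a b : nat) :
  1 < x -> (2 * x) ^ a <= x ^ b -> INR a * (1 + ln 2 / ln x) <= INR b.
Proof.
move=> x_gt1 le_pow.
have ln_x_gt0 : 0 < ln x by rewrite -ln_1; apply: ln_increasing; lra.
have le_ln : ln ((2 * x) ^ a) <= ln (x ^ b).
  apply: Rnot_lt_le => /ln_lt_inv lt_pow.
  by apply: (Rle_not_lt _ _ le_pow); apply: lt_pow; apply: pow_lt; lra.
rewrite !ln_pow ?ln_mult in le_ln; try lra.
apply: (Rmult_le_reg_r (ln x)) => //.
have -> : INR a * (1 + ln 2 / ln x) * ln x = INR a * (ln 2 + ln x) by field; lra.
lra.
Qed.

Theorem theorem1 (r : nat) (dq dn : seq nat) (kq kn : nat) :
  (2 <= r)%N ->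
  all (fun w => 0 < w)%N dq -> all (fun w => 0 < w)%N dn ->
  (2 <= head 0 dq)%N ->
  (1 < depth dq)%N -> (1 < depth dn)%N ->
  head 0%N dq = head 0%N dn ->
  last 0%N dq = last 0%N dn ->
  qres_filling r dq ->
  is_dim (V_qres r dq) kq ->
  is_dim (V_plain r dn) kn ->
  (kq <= kn)%N ->
  INR (depth dn) >= 1 + (1 + ln 2 / ln (INR r)) * (INR (depth dq) - 1).
Proof.
move=> r_ge2 pos_dq _ d0_ge2 depth_q depth_n eq_head eq_last filling dim_q dim_n le_k.
have card_q := card_sym_coords_le_dim (fun s => proj2 (filling s)) dim_q.
have card_n := dim_le_card_sym_coords (fun s => @proj1 _ _) dim_n.
rewrite -eq_head -eq_last in card_n.
have last_gt0 : (0 < last 0 dq)%N.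
  by move: pos_dq depth_q; case: (dq) => [|a l] // /allP pos _; apply/pos/mem_last.
have le_deg : ((2 * r) ^ (depth dq).-1 <= r ^ (depth dn).-1)%N.
  rewrite leqNgt; apply/negP => /(card_sym_coords_lt d0_ge2 last_gt0); lia.
have le_pow : (2 * INR r) ^ (depth dq).-1 <= INR r ^ (depth dn).-1.
  have := le_INR _ _ (ssrnat.leP le_deg).
  by rewrite !INRE !natrX natrM !RpowE RmultE.
have r_gt1 : 1 < INR r by apply: (lt_INR 1); exact/ssrnat.ltP.
have := pow_le_ln_bound r_gt1 le_pow.
rewrite -(prednK (ltnW depth_q)) -(prednK (ltnW depth_n)) !S_INR /=; lra.
Qed.
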